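(* Let $p\ne2$ be a rational prime and let $\mathbf{f}\in H_{1,2,2}$ be primitive to $p$ with $N(\mathbf{f})\equiv0\pmod p$. Then there exists $\widehat{\mathbf{f}}\in H_{1,2,2}$ with $\widehat{\mathbf{f}}-\mathbf{f}\in pH_{1,2,2}$, $N(\widehat{\mathbf{f}})\equiv0\pmod p$ and $N(\widehat{\mathbf{f}})\not\equiv0\pmod{p^2}$.
   Context: Let $\mathbf{i},\mathbf{j},\mathbf{k}$ be the standard quaternion units; $\overline{\mathbf{q}}$ is quaternion conjugation and $N(\mathbf{q})=\mathbf{q}\overline{\mathbf{q}}$. $H_{1,2,2}$ is the subring of the quaternions equal to the $\mathbb{Z}$-module generated by $\mathbf{v}_1=1$, $\mathbf{v}_2=\mathbf{i}$, $\mathbf{v}_3=\tfrac12(1+\mathbf{i}+\sqrt2\,\mathbf{j})$, $\mathbf{v}_4=\tfrac12(1+\mathbf{i}+\sqrt2\,\mathbf{k})$. An element $g_1\mathbf{v}_1+g_2\mathbf{v}_2+g_3\mathbf{v}_3+g_4\mathbf{v}_4$ ($g_i\in\mathbb{Z}$) is primitive to $p$ if $\gcd(g_1,g_2,g_3,g_4,p)=1$. *)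

From HB Require Import structures.
From mathcomp Require Import all_boot all_order all_algebra.
Set Implicit Arguments. Unset Strict Implicit. Unset Printing Implicit Defensive.
Import Order.TTheory GRing.Theory Num.Theory.
Local Open Scope ring_scope.

Record quat (R : rcfType) := Quat { qr : R; qi : R; qj : R; qk : R }.

Section Quat.
Variable R : rcfType.
Implicit Types x y : quat R.

Definition qadd x y := Quat (qr x + qr y) (qi x + qi y) (qj x + qj y) (qk x + qk y).
Definition qopp x := Quat (- qr x) (- qi x) (- qj x) (- qk x).
Definition qsub x y := qadd x (qopp y).
Definition qmul x y :=
  Quat (qr x * qr y - qi x * qi y - qj x * qj y - qk x * qk y)
       (qr x * qi y + qi x * qr y + qj x * qk y - qk x * qj y)
       (qr x * qj y - qi x * qk y + qj x * qr y + qk x * qi y)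
       (qr x * qk y + qi x * qj y - qj x * qi y + qk x * qr y).
Definition qconj x := Quat (qr x) (- qi x) (- qj x) (- qk x).
Definition qnorm x := qmul x (qconj x).
Definition qint (z : int) : quat R := Quat (z%:~R) 0 0 0.
Definition qzscale (z : int) x := qmul (qint z) x.

Definition v1 : quat R := Quat 1 0 0 0.
Definition v2 : quat R := Quat 0 1 0 0.
Definition v3 : quat R := Quat (1/2) (1/2) (Num.sqrt 2 / 2) 0.
Definition v4 : quat R := Quat (1/2) (1/2) 0 (Num.sqrt 2 / 2).

Definition H122_elt (g1 g2 g3 g4 : int) : quat R :=
  qadd (qadd (qzscale g1 v1) (qzscale g2 v2)) (qadd (qzscale g3 v3) (qzscale g4 v4)).

Definition in_H122 x := exists g1 g2 g3 g4 : int, x = H122_elt g1 g2 g3 g4.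

Definition primitive_H122 (p : nat) x :=
  exists g1 g2 g3 g4 : int, x = H122_elt g1 g2 g3 g4 /\
    gcdz (gcdz (gcdz (gcdz g1 g2) g3) g4) (p%:Z) = 1.

Definition norm_cong0 (m : int) x := exists n : int, qnorm x = qint n /\ (m %| n)%Z.
End Quat.

(* In the coordinates g of the basis v1..v4, N(g1 v1 + g2 v2 + g3 v3 + g4 v4) is the
   integral quadratic form Q122 g, and Q122 (g + p t) = Q122 g + p B(g, t) + p^2 Q122 t
   with B the polar form.  If p^2 divided Q122 (g + p t) both for t = 0 and for every
   unit vector t = e_i, then p would divide every partial derivative B(g, e_i).  Integral
   combinations of these give 2 g_i, so the odd prime p would divide every g_i,
   contradicting primitivity. *)
From HB Require Import structures.
From mathcomp Require Import all_boot all_order all_algebra.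
From mathcomp Require Import ring.
Import Order.TTheory GRing.Theory Num.Theory.
Local Open Scope ring_scope.

Definition Q122 (g1 g2 g3 g4 : int) : int :=
  g1 ^+ 2 + g2 ^+ 2 + (g1 + g2) * (g3 + g4) + g3 ^+ 2 + g3 * g4 + g4 ^+ 2.

Definition Q122_polar (g1 g2 g3 g4 t1 t2 t3 t4 : int) : int :=
  (2 * g1 + g3 + g4) * t1 + (2 * g2 + g3 + g4) * t2
  + (g1 + g2 + 2 * g3 + g4) * t3 + (g1 + g2 + g3 + 2 * g4) * t4.

Lemma Q122_shift (s g1 g2 g3 g4 t1 t2 t3 t4 : int) :
  Q122 (g1 + s * t1) (g2 + s * t2) (g3 + s * t3) (g4 + s * t4) =
  Q122 g1 g2 g3 g4 + s * Q122_polar g1 g2 g3 g4 t1 t2 t3 t4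
  + s ^+ 2 * Q122 t1 t2 t3 t4.
Proof. by rewrite /Q122 /Q122_polar; ring. Qed.

Lemma dvdz_Q122_shift (s g1 g2 g3 g4 t1 t2 t3 t4 : int) :
  (s %| Q122 g1 g2 g3 g4)%Z ->
  (s %| Q122 (g1 + s * t1) (g2 + s * t2) (g3 + s * t3) (g4 + s * t4))%Z.
Proof.
move=> sQ; rewrite Q122_shift expr2 -mulrA.
by apply: rpredD; [apply: rpredD|]; rewrite ?dvdz_mulr.
Qed.

(* Twice the inverse of the Gram matrix of Q122 is integral; this is why only
   p = 2 must be excluded. *)
Lemma dvdz_Q122_polar_double {m g1 g2 g3 g4 : int} :
  (m %| Q122_polar g1 g2 g3 g4 1 0 0 0)%Z -> (m %| Q122_polar g1 g2 g3 g4 0 1 0 0)%Z ->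
  (m %| Q122_polar g1 g2 g3 g4 0 0 1 0)%Z -> (m %| Q122_polar g1 g2 g3 g4 0 0 0 1)%Z ->
  [/\ (m %| 2 * g1)%Z, (m %| 2 * g2)%Z, (m %| 2 * g3)%Z & (m %| 2 * g4)%Z].
Proof.
rewrite /Q122_polar !mulr0 !mulr1 !addr0 !add0r => m1 m2 m3 m4.
split; [ have -> : 2 * g1 = 2 * (2 * g1 + g3 + g4) + (2 * g2 + g3 + g4)
                     - (g1 + g2 + 2 * g3 + g4) - (g1 + g2 + g3 + 2 * g4) by ring
        | have -> : 2 * g2 = (2 * g1 + g3 + g4) + 2 * (2 * g2 + g3 + g4)
                     - (g1 + g2 + 2 * g3 + g4) - (g1 + g2 + g3 + 2 * g4) by ring
        | have -> : 2 * g3 = - (2 * g1 + g3 + g4) - (2 * g2 + g3 + g4)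
                     + 2 * (g1 + g2 + 2 * g3 + g4) by ring
        | have -> : 2 * g4 = - (2 * g1 + g3 + g4) - (2 * g2 + g3 + g4)
                     + 2 * (g1 + g2 + g3 + 2 * g4) by ring ];
  by repeat first
    [assumption | apply: rpredD | apply: rpredB | apply: dvdz_mull | rewrite rpredN].
Qed.

Lemma odd_prime_dvdz_double (p : nat) (g : int) : prime p -> p != 2%N ->
  (p%:Z %| 2 * g)%Z = (p%:Z %| g)%Z.
Proof.
move=> p_pr p_neq2; rewrite Gauss_dvdzr // coprimezE /= prime_coprime //.
by rewrite dvdn_prime2 // eq_sym.
Qed.

Lemma not_dvdz_sq_shift (p Q d c : int) : p != 0 ->
  (p ^+ 2 %| Q)%Z -> ~~ (p %| d)%Z -> ~~ (p ^+ 2 %| Q + p * d + p ^+ 2 * c)%Z.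
Proof.
move=> p_neq0 pQ; apply: contra => pQdc.
have : (p * p %| (Q + p * d + p ^+ 2 * c) - Q - p ^+ 2 * c)%Z.
  by rewrite -expr2 !rpredB // dvdz_mulr.
have -> : Q + p * d + p ^+ 2 * c - Q - p ^+ 2 * c = p * d by ring.
by rewrite dvdz_mul2l.
Qed.

Lemma primitive_not_all_dvdz {p : nat} {g1 g2 g3 g4 : int} : prime p ->
  gcdz (gcdz (gcdz (gcdz g1 g2) g3) g4) p%:Z = 1 ->
  ~ [/\ (p%:Z %| g1)%Z, (p%:Z %| g2)%Z, (p%:Z %| g3)%Z & (p%:Z %| g4)%Z].
Proof.
move=> p_pr g_prim [p1 p2 p3 p4].
have : (p%:Z %| gcdz (gcdz (gcdz (gcdz g1 g2) g3) g4) p%:Z)%Z.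
  by rewrite !dvdz_gcd p1 p2 p3 p4 dvdzz.
by rewrite g_prim dvdz1 absz_nat => /eqP p_eq1; rewrite p_eq1 in p_pr.
Qed.

Lemma Q122_lift {p : nat} {g1 g2 g3 g4 : int} : prime p -> p != 2%N ->
  gcdz (gcdz (gcdz (gcdz g1 g2) g3) g4) p%:Z = 1 ->
  exists t1 t2 t3 t4 : int,
    ~~ (p%:Z ^+ 2 %| Q122 (g1 + p%:Z * t1) (g2 + p%:Z * t2) (g3 + p%:Z * t3)
                         (g4 + p%:Z * t4))%Z.
Proof.
move=> p_pr p_neq2 g_prim; set P := p%:Z.
have P_neq0 : P != 0 by rewrite eqz_nat -lt0n prime_gt0.
have [PQ|] := boolP (P ^+ 2 %| Q122 g1 g2 g3 g4)%Z; last first.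
  by exists 0, 0, 0, 0; rewrite !mulr0 !addr0.
have lift t1 t2 t3 t4 : ~~ (P %| Q122_polar g1 g2 g3 g4 t1 t2 t3 t4)%Z ->
    exists t1 t2 t3 t4 : int,
      ~~ (P ^+ 2 %| Q122 (g1 + P * t1) (g2 + P * t2) (g3 + P * t3) (g4 + P * t4))%Z.
  by move=> Pd; exists t1, t2, t3, t4; rewrite Q122_shift not_dvdz_sq_shift.
have [e1|] := boolP (P %| Q122_polar g1 g2 g3 g4 1 0 0 0)%Z; last exact: lift.
have [e2|] := boolP (P %| Q122_polar g1 g2 g3 g4 0 1 0 0)%Z; last exact: lift.
have [e3|] := boolP (P %| Q122_polar g1 g2 g3 g4 0 0 1 0)%Z; last exact: lift.
have [e4|] := boolP (P %| Q122_polar g1 g2 g3 g4 0 0 0 1)%Z; last exact: lift.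
case: (dvdz_Q122_polar_double e1 e2 e3 e4).
rewrite !odd_prime_dvdz_double // => P1 P2 P3 P4.
by case: (primitive_not_all_dvdz p_pr g_prim).
Qed.

Lemma qint_inj {R : rcfType} {m n : int} : qint R m = qint R n -> m = n.
Proof. by move=> /(congr1 (@qr R)) /= /eqP; rewrite eqr_int => /eqP. Qed.

Lemma qnorm_Quat (R : rcfType) (a b c d : R) :
  qnorm (Quat a b c d) = Quat (a ^+ 2 + b ^+ 2 + c ^+ 2 + d ^+ 2) 0 0 0.
Proof. by rewrite /qnorm /qmul /qconj /=; congr Quat; ring. Qed.

Lemma H122_eltE (R : rcfType) (g1 g2 g3 g4 : int) :
  H122_elt R g1 g2 g3 g4 =
  Quat (g1%:~R + (g3%:~R + g4%:~R) / 2) (g2%:~R + (g3%:~R + g4%:~R) / 2)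
       (g3%:~R * Num.sqrt 2 / 2) (g4%:~R * Num.sqrt 2 / 2).
Proof.
by rewrite /H122_elt /qadd /qzscale /qint /qmul /v1 /v2 /v3 /v4 /=; congr Quat; ring.
Qed.

Lemma qnorm_H122_elt (R : rcfType) (g1 g2 g3 g4 : int) :
  qnorm (H122_elt R g1 g2 g3 g4) = qint R (Q122 g1 g2 g3 g4).
Proof.
have sqrt2_sq : Num.sqrt (2 : R) ^+ 2 = 2 by rewrite sqr_sqrtr // ler0n.
rewrite H122_eltE qnorm_Quat /qint /Q122; congr Quat.
rewrite !(exprMn, mulrAC _ (Num.sqrt 2)) sqrt2_sq.
rewrite !(rmorphD, rmorphM, rmorphXn) /=.
by field.
Qed.

Lemma H122_elt_shift (R : rcfType) (s g1 g2 g3 g4 t1 t2 t3 t4 : int) :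
  qsub (H122_elt R (g1 + s * t1) (g2 + s * t2) (g3 + s * t3) (g4 + s * t4))
       (H122_elt R g1 g2 g3 g4) = qzscale s (H122_elt R t1 t2 t3 t4).
Proof.
rewrite !H122_eltE /qsub /qopp /qadd /qzscale /qint /qmul /=.
by congr Quat; rewrite !(rmorphD, rmorphM) /=; ring.
Qed.

Theorem lemma39 (R : rcfType) (p : nat) (f : quat R) :
  prime p -> p != 2%N ->
  primitive_H122 p f -> norm_cong0 (p%:Z) f ->
  exists fh : quat R,
    in_H122 fh /\
    (exists h : quat R, in_H122 h /\ qsub fh f = qzscale (p%:Z) h) /\
    exists n : int, qnorm fh = qint R n /\ (p%:Z %| n)%Z /\ ~~ ((p%:Z ^+ 2) %| n)%Z.
Proof.
move=> p_pr p_neq2 [g1 [g2 [g3 [g4 [-> g_prim]]]]] [n [fN pn]].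
rewrite qnorm_H122_elt in fN; rewrite -(qint_inj fN) in pn.
have [t1 [t2 [t3 [t4 not_p2]]]] := Q122_lift p_pr p_neq2 g_prim.
exists (H122_elt R (g1 + p%:Z * t1) (g2 + p%:Z * t2) (g3 + p%:Z * t3) (g4 + p%:Z * t4)).
split; first by do 4 eexists.
split.
  by exists (H122_elt R t1 t2 t3 t4); rewrite H122_elt_shift; split; first do 4 eexists.
exists (Q122 (g1 + p%:Z * t1) (g2 + p%:Z * t2) (g3 + p%:Z * t3) (g4 + p%:Z * t4)).
by rewrite qnorm_H122_elt dvdz_Q122_shift.
Qed.
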